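(* (a) If $f:A\to B$ is an equivalence of types, then for all $x:A$ the differential $df_x:\mathbb{D}_x\to\mathbb{D}_{f(x)}$ is an equivalence. (b) Let $A$ be a type and $x,y:A$. For any equality $\gamma:x=y$ there is an equivalence $\mathbb{D}_x\simeq\mathbb{D}_y$.
   Context: Work in homotopy type theory (function extensionality, univalent universe $\mathcal{U}$) with a postulated modality: a map $\Im:\mathcal{U}\to\mathcal{U}$ and maps $\iota_A:A\to\Im A$ for every type $A$, such that for every $B:\Im A\to\mathcal{U}$ precomposition with $\iota_A$, $\left(\prod_{a:\Im A}\Im B(a)\right)\to\left(\prod_{a:A}\Im B(\iota_A(a))\right)$, is an equivalence. For $f:A\to B$, $\Im f:\Im A\to\Im B$ is the map obtained from this elimination property, with identifications $\eta_f(a):\Im f(\iota_A(a))=\iota_B(f(a))$. The formal disk at $a:A$ is $\mathbb{D}_a:=\sum_{x:A}(\iota_A(x)=\iota_A(a))$. The differential of $f$ at $a$ is $df_a:\mathbb{D}_a\to\mathbb{D}_{f(a)}$, $(x,\varepsilon)\mapsto (f(x),\ \eta_f(x)^{-1}\cdot \mathrm{ap}_{\Im f}(\varepsilon)\cdot\eta_f(a))$. *)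

Inductive paths {A : Type} (a : A) : A -> Type :=
  idpath : paths a a.
Arguments idpath {A a}, [A] a.

Notation "x == y" := (paths x y) (at level 70, no associativity) : type_scope.

Definition inv {A : Type} {x y : A} (p : x == y) : y == x :=
  match p with idpath => idpath end.

Definition concat {A : Type} {x y z : A} (p : x == y) (q : y == z) : x == z :=
  match q with idpath => p end.

Definition ap {A B : Type} (f : A -> B) {x y : A} (p : x == y) : f x == f y :=
  match p with idpath => idpath end.

Definition happly {A : Type} {B : A -> Type} {f g : forall a, B a}
  (p : f == g) : forall a, f a == g a :=
  fun a => match p with idpath => idpath end.

Record IsEquiv {A B : Type} (f : A -> B) : Type := {
  eq_sec : B -> A;
  eq_sec_h : forall b, f (eq_sec b) == b;
  eq_ret : B -> A;
  eq_ret_h : forall a, eq_ret (f a) == a }.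

Definition Funext : Type :=
  forall (A : Type) (B : A -> Type) (f g : forall a, B a), IsEquiv (@happly A B f g).

Definition Equiv (A B : Type) : Type := { e : A -> B & IsEquiv e }.

Definition precomp (Im : Type -> Type) (iota : forall A : Type, A -> Im A)
  (A : Type) (B : Im A -> Type) :
  (forall a : Im A, Im (B a)) -> (forall a : A, Im (B (iota A a))) :=
  fun h a => h (iota A a).
Arguments precomp : clear implicits.

Definition ModalElim (Im : Type -> Type) (iota : forall A : Type, A -> Im A) : Type :=
  forall (A : Type) (B : Im A -> Type), IsEquiv (precomp Im iota A B).

Section Modality.
Variables (Im : Type -> Type) (iota : forall A : Type, A -> Im A)
  (elim : ModalElim Im iota).

Definition Imf {A B : Type} (f : A -> B) : Im A -> Im B :=
  eq_sec _ (elim A (fun _ => B)) (fun a => iota B (f a)).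

Definition eta {A B : Type} (f : A -> B) (a : A) :
  Imf f (iota A a) == iota B (f a) :=
  happly (eq_sec_h _ (elim A (fun _ => B)) (fun a => iota B (f a))) a.

Definition Disk {A : Type} (a : A) : Type := { x : A & iota A x == iota A a }.

Definition dif {A B : Type} (f : A -> B) (a : A) : Disk a -> Disk (f a) :=
  fun p => existT _ (f (projT1 p))
    (concat (concat (inv (eta f (projT1 p))) (ap (Imf f) (projT2 p))) (eta f a)).

End Modality.

(* The differential [dif f x] is, definitionally, the map of Σ-types that acts
   on the base by [f] and on the fibres [ι x' = ι x] by conjugating [ap (Im f)]
   with the [η]'s.  When [f] has a quasi-inverse [g], uniqueness of extensions
   along [ι] (which needs function extensionality) makes [Im g] a quasi-inverse
   of [Im f]; hence [ap (Im f)] and each fibre map are equivalences, and so is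
   the total map.  Reindexing a Σ-type along an equivalence is an equivalence
   once the inverse data is made half adjoint.  Part (b) is transport of the
   family of disks. *)


Definition paths_of_eq {A : Type} {x y : A} (e : x = y) : x == y :=
  match e with eq_refl => idpath end.

Definition transport {A : Type} (P : A -> Type) {x y : A} (p : x == y) (u : P x) : P y :=
  match p with idpath => u end.

Lemma concat_1p {A : Type} {x y : A} (p : x == y) : concat idpath p = p.
Proof. destruct p; reflexivity. Qed.

Lemma concat_p_pp {A : Type} {x y z w : A} (p : x == y) (q : y == z) (r : z == w) :
  concat p (concat q r) = concat (concat p q) r.
Proof. destruct r; reflexivity. Qed.

Lemma concat_pV {A : Type} {x y : A} (p : x == y) : concat p (inv p) = idpath.
Proof. destruct p; reflexivity. Qed.

Lemma concat_Vp {A : Type} {x y : A} (p : x == y) : concat (inv p) p = idpath.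
Proof. destruct p; reflexivity. Qed.

Lemma ap_pp {A B : Type} (f : A -> B) {x y z : A} (p : x == y) (q : y == z) :
  ap f (concat p q) = concat (ap f p) (ap f q).
Proof. destruct q; reflexivity. Qed.

Lemma ap_V {A B : Type} (f : A -> B) {x y : A} (p : x == y) : ap f (inv p) = inv (ap f p).
Proof. destruct p; reflexivity. Qed.

Lemma ap_compose {A B C : Type} (f : A -> B) (g : B -> C) {x y : A} (p : x == y) :
  ap (fun a => g (f a)) p = ap g (ap f p).
Proof. destruct p; reflexivity. Qed.

Lemma ap_idmap {A : Type} {x y : A} (p : x == y) : ap (fun a => a) p = p.
Proof. destruct p; reflexivity. Qed.

Lemma concat_Ap {A B : Type} {f g : A -> B} (H : forall a, f a == g a)
  {x y : A} (p : x == y) :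
  concat (ap f p) (H y) = concat (H x) (ap g p).
Proof. destruct p; simpl; rewrite concat_1p; reflexivity. Qed.

Lemma cancelR {A : Type} {x y z : A} (p : y == z) (q r : x == y) :
  concat q p = concat r p -> q = r.
Proof.
  intros E. apply (f_equal (fun t => concat t (inv p))) in E.
  rewrite <- !concat_p_pp, !concat_pV in E. exact E.
Qed.

Lemma moveL_Vp {A : Type} {x y z : A} (p : y == x) (q : y == z) (r : x == z) :
  concat p r = q -> r = concat (inv p) q.
Proof. intros <-. rewrite concat_p_pp, concat_Vp, concat_1p. reflexivity. Qed.

Lemma ap_homotopic_id {A : Type} (h : A -> A) (r : forall a, h a == a) (a : A) :
  r (h a) = ap h (r a).
Proof.
  pose proof (concat_Ap r (r a)) as E. rewrite ap_idmap in E.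
  symmetry. exact (cancelR _ _ _ E).
Qed.

Lemma transport_pV {A : Type} (P : A -> Type) {x y : A} (p : x == y) (u : P y) :
  transport P p (transport P (inv p) u) = u.
Proof. destruct p; reflexivity. Qed.

Lemma transport_Vp {A : Type} (P : A -> Type) {x y : A} (p : x == y) (u : P x) :
  transport P (inv p) (transport P p u) = u.
Proof. destruct p; reflexivity. Qed.

Lemma transport_compose {A B : Type} (f : A -> B) (P : B -> Type) {x y : A}
  (p : x == y) (u : P (f x)) :
  transport (fun a => P (f a)) p u = transport P (ap f p) u.
Proof. destruct p; reflexivity. Qed.

Lemma path_sigma {A : Type} (P : A -> Type) {a1 a2 : A} (p : a1 == a2)
  (u1 : P a1) (u2 : P a2) :
  transport P p u1 = u2 -> existT P a1 u1 = existT P a2 u2.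
Proof. destruct p; simpl; intros ->; reflexivity. Qed.

Record QInv {A B : Type} (f : A -> B) : Type := {
  qinv_map : B -> A;
  qinv_isretr : forall b, f (qinv_map b) == b;
  qinv_issect : forall a, qinv_map (f a) == a }.
Arguments qinv_map {A B f}.
Arguments qinv_isretr {A B f}.
Arguments qinv_issect {A B f}.

Definition isequiv_qinv {A B : Type} {f : A -> B} (Q : QInv f) : IsEquiv f :=
  Build_IsEquiv _ _ f (qinv_map Q) (qinv_isretr Q) (qinv_map Q) (qinv_issect Q).

(* The two inverses of a bi-invertible map agree, so [eq_sec] is also a retraction. *)
Definition qinv_isequiv {A B : Type} {f : A -> B} (E : IsEquiv f) : QInv f.
Proof.
  refine (Build_QInv _ _ f (eq_sec _ E) (eq_sec_h _ E) _).
  intros a.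
  exact (concat (concat (inv (eq_ret_h _ E (eq_sec _ E (f a))))
                        (ap (eq_ret _ E) (eq_sec_h _ E (f a))))
                (eq_ret_h _ E a)).
Defined.

Definition qinv_compose {A B C : Type} {f : A -> B} {g : B -> C}
  (F : QInv f) (G : QInv g) : QInv (fun a => g (f a)).
Proof.
  refine (Build_QInv _ _ _ (fun c => qinv_map F (qinv_map G c)) _ _).
  - intros c. exact (concat (ap g (qinv_isretr F (qinv_map G c))) (qinv_isretr G c)).
  - intros a. exact (concat (ap (qinv_map F) (qinv_issect G (f a))) (qinv_issect F a)).
Defined.

Definition qinv_concat_l {A : Type} {x y z : A} (e : x == y) :
  QInv (fun q : y == z => concat e q).
Proof.
  refine (Build_QInv _ _ _ (fun q => concat (inv e) q) _ _); intros q; apply paths_of_eq.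
  - rewrite concat_p_pp, concat_pV, concat_1p. reflexivity.
  - rewrite concat_p_pp, concat_Vp, concat_1p. reflexivity.
Defined.

Definition qinv_concat_r {A : Type} {x y z : A} (e : y == z) :
  QInv (fun q : x == y => concat q e).
Proof.
  refine (Build_QInv _ _ _ (fun q => concat q (inv e)) _ _); intros q; apply paths_of_eq.
  - rewrite <- concat_p_pp, concat_Vp. reflexivity.
  - rewrite <- concat_p_pp, concat_pV. reflexivity.
Defined.

Definition qinv_transport {A : Type} (P : A -> Type) {x y : A} (p : x == y) :
  QInv (transport P p) :=
  Build_QInv _ _ _ (transport P (inv p))
    (fun u => paths_of_eq (transport_pV P p u))
    (fun u => paths_of_eq (transport_Vp P p u)).

Section QuasiInverse.
Variables (A B : Type) (f : A -> B) (Q : QInv f).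

Definition adj_isretr (b : B) : f (qinv_map Q b) == b :=
  concat (inv (qinv_isretr Q (f (qinv_map Q b))))
         (concat (ap f (qinv_issect Q (qinv_map Q b))) (qinv_isretr Q b)).

Lemma ap_qinv_issect (a : A) : ap f (qinv_issect Q a) = adj_isretr (f a).
Proof.
  unfold adj_isretr. apply moveL_Vp.
  rewrite (ap_homotopic_id (fun a => qinv_map Q (f a)) (qinv_issect Q) a).
  rewrite <- (ap_compose (fun a => qinv_map Q (f a)) f).
  rewrite (ap_compose f (fun b => f (qinv_map Q b))).
  rewrite (concat_Ap (qinv_isretr Q) (ap f (qinv_issect Q a))), ap_idmap.
  reflexivity.
Qed.

Definition qinv_ap (u v : A) : QInv (fun p : u == v => ap f p).
Proof.
  refine (Build_QInv _ _ _
    (fun q => concat (inv (qinv_issect Q u))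
                     (concat (ap (qinv_map Q) q) (qinv_issect Q v))) _ _).
  - intros q. apply paths_of_eq.
    rewrite !ap_pp, ap_V, !ap_qinv_issect, <- (ap_compose (qinv_map Q) f).
    rewrite (concat_Ap adj_isretr q), ap_idmap, concat_p_pp, concat_Vp, concat_1p.
    reflexivity.
  - intros p. apply paths_of_eq. destruct p. simpl.
    rewrite concat_1p, concat_Vp. reflexivity.
Defined.

Definition functor_sigma_base (P : B -> Type) :
  {a : A & P (f a)} -> {b : B & P b} :=
  fun u => existT P (f (projT1 u)) (projT2 u).

Definition qinv_functor_sigma_base (P : B -> Type) : QInv (functor_sigma_base P).
Proof.
  refine (Build_QInv _ _ _
    (fun w => existT (fun a => P (f a)) (qinv_map Q (projT1 w))
                (transport P (inv (adj_isretr (projT1 w))) (projT2 w))) _ _).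
  - intros [b u]. apply paths_of_eq, (path_sigma P (adj_isretr b)).
    apply transport_pV.
  - intros [a u]. apply paths_of_eq, (path_sigma (fun a => P (f a)) (qinv_issect Q a)).
    rewrite transport_compose, ap_qinv_issect. apply transport_pV.
Defined.

End QuasiInverse.

Definition functor_sigma_fiber {A : Type} {P R : A -> Type} (phi : forall a, P a -> R a) :
  {a : A & P a} -> {a : A & R a} :=
  fun u => existT R (projT1 u) (phi (projT1 u) (projT2 u)).

Definition qinv_functor_sigma_fiber {A : Type} {P R : A -> Type}
  (phi : forall a, P a -> R a) (H : forall a, QInv (phi a)) :
  QInv (functor_sigma_fiber phi).
Proof.
  refine (Build_QInv _ _ _
    (fun w => existT P (projT1 w) (qinv_map (H (projT1 w)) (projT2 w))) _ _).
  - intros [a r]. exact (ap (existT R a) (qinv_isretr (H a) r)).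
  - intros [a p]. exact (ap (existT P a) (qinv_issect (H a) p)).
Defined.

Section Modality.
Variables (fe : Funext) (Im : Type -> Type) (iota : forall A : Type, A -> Im A)
  (elim : ModalElim Im iota).

Let Im_map {A B : Type} (f : A -> B) : Im A -> Im B := Imf Im iota elim f.
Let Im_eta {A B : Type} (f : A -> B) (a : A) := eta Im iota elim f a.

(* By funext [H] identifies the two precompositions, and [precomp] has a
   retraction, so it is injective on identifications. *)
Definition Im_homotopy_ext {A C : Type} (h k : Im A -> Im C)
  (H : forall a, h (iota A a) == k (iota A a)) : forall z, h z == k z.
Proof.
  set (E := elim A (fun _ => C)).
  pose (p := eq_sec _ (fe _ _ _ _) H
         : precomp Im iota A (fun _ => C) h == precomp Im iota A (fun _ => C) k).
  apply happly.
  exact (concat (concat (inv (eq_ret_h _ E h)) (ap (eq_ret _ E) p)) (eq_ret_h _ E k)).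
Defined.

Definition Imf_section {A B : Type} (f : A -> B) (g : B -> A)
  (s : forall b, f (g b) == b) : forall z, Im_map f (Im_map g z) == z.
Proof.
  apply (Im_homotopy_ext (fun z => Im_map f (Im_map g z)) (fun z => z)).
  intros b.
  exact (concat (concat (ap (Im_map f) (Im_eta g b)) (Im_eta f (g b)))
                (ap (iota B) (s b))).
Defined.

Definition qinv_Imf {A B : Type} {f : A -> B} (Q : QInv f) : QInv (Im_map f) :=
  Build_QInv _ _ _ (Im_map (qinv_map Q))
    (Imf_section f (qinv_map Q) (qinv_isretr Q))
    (Imf_section (qinv_map Q) f (qinv_issect Q)).

Definition dif_fiber {A B : Type} (f : A -> B) (x x' : A)
  (e : iota A x' == iota A x) : iota B (f x') == iota B (f x) :=
  concat (concat (inv (Im_eta f x')) (ap (Im_map f) e)) (Im_eta f x).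

Definition qinv_dif_fiber {A B : Type} {f : A -> B} (Q : QInv f) (x x' : A) :
  QInv (dif_fiber f x x') :=
  qinv_compose (qinv_compose (qinv_ap _ _ _ (qinv_Imf Q) _ _) (qinv_concat_l _))
               (qinv_concat_r _).

Lemma isequiv_dif {A B : Type} (f : A -> B) (Hf : IsEquiv f) (x : A) :
  IsEquiv (dif Im iota elim f x).
Proof.
  pose (Q := qinv_isequiv Hf).
  exact (isequiv_qinv
    (qinv_compose (qinv_functor_sigma_fiber (dif_fiber f x) (qinv_dif_fiber Q x))
                  (qinv_functor_sigma_base _ _ f Q (fun b => iota B b == iota B (f x))))).
Qed.

End Modality.

Theorem lemma3p10
  (fe : Funext)
  (Im : Type -> Type) (iota : forall A : Type, A -> Im A)
  (elim : ModalElim Im iota) :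
  (forall (A B : Type) (f : A -> B), IsEquiv f ->
     forall x : A, IsEquiv (dif Im iota elim f x))
  * (forall (A : Type) (x y : A), x == y ->
       Equiv (Disk Im iota x) (Disk Im iota y)).
Proof.
  split.
  - exact (@isequiv_dif fe Im iota elim).
  - intros A x y gamma.
    exact (existT _ (transport (Disk Im iota) gamma)
                    (isequiv_qinv (qinv_transport (Disk Im iota) gamma))).
Qed.
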